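(* Any $1$-consistent algorithm for the $\{0,1\}$-speed SSP problem has robustness at least $\frac{2(m-1)}{m}$, where $m$ is the total number of machines.
   Context: $\{0,1\}$-speed SSP: there are $n$ jobs with processing times $p_1,\dots,p_n\ge0$ and $m$ machines, each of speed $0$ (unavailable) or $1$ (available). In the partitioning stage the algorithm knows $\mathbf p$, $m$ and a prediction $\hat m$ of the number of available machines, and partitions the jobs into $m$ possibly empty bags. In the scheduling stage the actual number $m_0\ge1$ of available machines is revealed and each bag is assigned whole to one of the $m_0$ identical unit-speed machines; the makespan is the maximum total processing time on a machine. $opt(\mathbf p,x)$ is the minimum makespan of scheduling the individual jobs on $x$ identical unit-speed machines; $alg(\mathbf p,\hat m,m_0)$ is the algorithm's makespan. An algorithm is $1$-consistent if $alg(\mathbf p,m_0,m_0)\le opt(\mathbf p,m_0)$ for all $\mathbf p,m_0$; its robustness is $\sup_{\mathbf p,\hat m,m_0} alg(\mathbf p,\hat m,m_0)/opt(\mathbf p,m_0)$. *)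

From mathcomp Require Import all_boot all_order all_algebra.
Set Implicit Arguments. Unset Strict Implicit. Unset Printing Implicit Defensive.
Import Order.TTheory GRing.Theory Num.Theory.
Local Open Scope ring_scope.

Section SSP.
Variable R : realFieldType.

Definition makespan (n x : nat) (p : 'I_n -> R) (a : 'I_n -> 'I_x) : R :=
  \big[Num.max/0]_(j < x) \sum_(i < n | a i == j) p i.

(* opt(p, k.+1): minimum makespan over all schedules of the individual jobs
   on k.+1 machines (the machine count is k.+1 >= 1). *)
Definition opt (n k : nat) (p : 'I_n -> R) : R :=
  \big[Num.min/makespan p (fun _ => (ord0 : 'I_k.+1))]_(a : {ffun 'I_n -> 'I_k.+1})
     makespan p a.

(* A (deterministic) algorithm for {0,1}-speed SSP with m machines:
   - partitioning stage: given the jobs p and the prediction mhat, put each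
     job into one of m bags;
   - scheduling stage: given p, mhat and the actual number k.+1 (1 <= k.+1 <= m)
     of available machines, assign each bag to one of the k.+1 machines. *)
Record ssp_alg (m : nat) := SSPAlg {
  partition : forall n : nat, ('I_n -> R) -> nat -> 'I_n -> 'I_m;
  schedule : forall n : nat, ('I_n -> R) -> nat -> forall k : 'I_m, 'I_m -> 'I_k.+1
}.

Definition alg_cost (m : nat) (A : ssp_alg m) (n : nat) (p : 'I_n -> R)
  (mhat : nat) (k : 'I_m) : R :=
  makespan p (fun i => schedule A p mhat k (partition A p mhat i)).

Definition nonneg_jobs (n : nat) (p : 'I_n -> R) := forall i, 0 <= p i.

Definition one_consistent (m : nat) (A : ssp_alg m) : Prop :=
  forall (n : nat) (p : 'I_n -> R), nonneg_jobs p ->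
    forall k : 'I_m, alg_cost A p k.+1 k <= opt k p.

Definition robust_within (m : nat) (A : ssp_alg m) (rho : R) : Prop :=
  forall (n : nat) (p : 'I_n -> R), nonneg_jobs p ->
    forall mhat : nat, (1 <= mhat <= m)%N ->
    forall k : 'I_m, alg_cost A p mhat k <= rho * opt k p.

End SSP.

From Pilot Require Import Defs.
From mathcomp Require Import all_boot all_order all_algebra.
Import Order.TTheory GRing.Theory Num.Theory.
Set Implicit Arguments. Unset Strict Implicit. Unset Printing Implicit Defensive.
Local Open Scope ring_scope.

(* Give the algorithm m(m-1) unit jobs and the prediction m. If m machines
   are available, 1-consistency forces makespan opt = m-1, so every machine
   carries exactly m-1 jobs; as there are only m bags, the schedule maps bags
   bijectively to machines and every bag holds m-1 jobs. If only m-1 machines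
   are available, two bags share a machine, so the makespan is 2(m-1) while
   opt <= m. For m = 1 the bound only says that the robustness is positive. *)

Lemma surjF_inj (T : finType) (f : T -> T) :
  (forall y, exists x, f x = y) -> injective f.
Proof.
move=> f_surj x1 x2; apply: (@image_injP _ _ f T _) => //; apply/eqP/eq_card => y.
by have [x <-] := f_surj y; rewrite image_f.
Qed.

Lemma card_div_eq a c j : (0 < c -> j < a ->
  #|[pred i : 'I_(a * c) | i %/ c == j]| = c)%N.
Proof.
move=> c_gt0; rewrite -sum1_card; elim: a j => // a IHa j.
rewrite mulSn big_split_ord /=.
have shift i : ((c + i) %/ c = (i %/ c).+1)%N by rewrite divnDl ?dvdnn // divnn c_gt0.
case: j => [|j] j_lt.
  rewrite [X in (_ + X)%N]big1 ?addn0 => [|i]; last by rewrite inE /= shift.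
  by rewrite (eq_bigl predT) ?sum1_card ?card_ord // => i; rewrite inE /= divn_small.
rewrite [X in (X + _)%N]big1 ?add0n => [|i]; last by rewrite inE /= divn_small.
by rewrite -[RHS](IHa j) //; apply: eq_bigl => i; rewrite !inE /= shift.
Qed.

Section Schedules.
Variable R : realFieldType.

Definition load n x (p : 'I_n -> R) (a : 'I_n -> 'I_x) (j : 'I_x) : R :=
  \sum_(i < n | a i == j) p i.

Definition unit_jobs n : 'I_n -> R := fun=> 1.

Variables (n : nat) (p : 'I_n -> R).

Lemma load_ge0 x (a : 'I_n -> 'I_x) j : nonneg_jobs p -> 0 <= load p a j.
Proof. by move=> p_ge0; apply: sumr_ge0 => i _. Qed.

Lemma load_le_makespan x (a : 'I_n -> 'I_x) j : load p a j <= makespan p a.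
Proof. by rewrite /makespan (bigD1 j) //= le_max lexx. Qed.

Lemma makespan_ge0 x (a : 'I_n -> 'I_x) : 0 <= makespan p a.
Proof.
by rewrite /makespan; elim/big_rec: _ => // j y _ y_ge0; rewrite le_max y_ge0 orbT.
Qed.

Lemma makespan_le x (a : 'I_n -> 'I_x) c :
  0 <= c -> (forall j, load p a j <= c) -> makespan p a <= c.
Proof.
move=> c_ge0 a_le; rewrite /makespan.
by elim/big_rec: _ => // j y _ y_le; rewrite ge_max a_le.
Qed.

Lemma load_comp x m (b : 'I_n -> 'I_m) (s : 'I_m -> 'I_x) j :
  load p (s \o b) j = \sum_(c < m | s c == j) load p b c.
Proof.
rewrite /load (partition_big b (fun c => s c == j)) //.
apply: eq_bigr => c /eqP sc_j; apply: eq_bigl => i /=.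
by case: (b i =P c) => [->|_]; rewrite ?sc_j ?eqxx ?andbF.
Qed.

Lemma sum_load x (a : 'I_n -> 'I_x) : \sum_(j < x) load p a j = \sum_(i < n) p i.
Proof. by rewrite (partition_big a predT). Qed.

Lemma opt_ge0 k : 0 <= opt k p.
Proof.
by rewrite /opt; elim/big_rec: _ => [|a o _ o_ge0]; rewrite ?le_min ?o_ge0 makespan_ge0.
Qed.

Lemma opt_le_makespan k (a : 'I_n -> 'I_k.+1) : opt k p <= makespan p a.
Proof.
have -> : makespan p a = makespan p [ffun i => a i].
  by apply: eq_bigr => j _; apply: eq_bigl => i; rewrite ffunE.
by rewrite /opt (bigD1 [ffun i => a i]) //= ge_min lexx.
Qed.

End Schedules.

Arguments unit_jobs : clear implicits.

Lemma unit_jobs_nonneg {R : realFieldType} {n : nat} : nonneg_jobs (unit_jobs R n).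
Proof. by move=> i; apply: ler01. Qed.

Lemma load_unit_jobs (R : realFieldType) n x (a : 'I_n -> 'I_x) j :
  load (unit_jobs R n) a j = #|[pred i | a i == j]|%:R.
Proof. by rewrite /load sumr_const. Qed.

Lemma opt_unit_jobs_le (R : realFieldType) n k c :
  (0 < c)%N -> n = (k.+1 * c)%N -> opt k (unit_jobs R n) <= c%:R.
Proof.
move=> c_gt0 n_eq.
have div_lt (i : 'I_n) : (i %/ c < k.+1)%N by rewrite ltn_divLR // -n_eq.
apply: le_trans (opt_le_makespan _ (fun i => Ordinal (div_lt i))) _.
apply: makespan_le => // j; rewrite load_unit_jobs ler_nat; subst n.
apply/eq_leq; rewrite -[RHS](card_div_eq c_gt0 (ltn_ord j)).
by apply: eq_card => i; rewrite !inE -val_eqE.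
Qed.

Lemma eq_bound_of_sum (R : realFieldType) (I : finType) (F : I -> R) c :
  (forall i, F i <= c) -> \sum_i F i = c *+ #|I| -> forall i, F i = c.
Proof.
move=> F_le sumF i; apply/esym/subr0_eq.
apply: (@psumr_eq0P _ _ predT (fun i => c - F i)) => // [j _|].
  by rewrite subr_ge0.
by rewrite sumrB sumF sumr_const subrr.
Qed.

Lemma robust_within_gt0 (R : realFieldType) m (A : ssp_alg R m) rho :
  (0 < m)%N -> robust_within A rho -> 0 < rho.
Proof.
move=> m_gt0 A_rob; pose p := unit_jobs R 1.
have cost_le := A_rob 1%N p unit_jobs_nonneg 1%N m_gt0 (Ordinal m_gt0).
have cost_ge1 : 1 <= alg_cost A p 1 (Ordinal m_gt0).
  rewrite /alg_cost; set a := fun i => _.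
  by apply: le_trans (load_le_makespan _ a (a ord0)); rewrite /load big_ord1_cond eqxx.
have [//|rho_le0] := ltrP 0 rho.
have := mulr_le0_ge0 rho_le0 (opt_ge0 p 0).
by move/(le_trans (le_trans cost_ge1 cost_le)); rewrite ler10.
Qed.

Section ConsistentSchedule.
Variables (R : realFieldType) (M : nat) (A : ssp_alg R M.+2).
Hypothesis A_cons : one_consistent A.

Let n := (M.+2 * M.+1)%N.
Let p := unit_jobs R n.
Let bags := Defs.partition A p M.+2.
Let sigma := schedule A p M.+2 ord_max.

Lemma consistent_machine_load j : load p (sigma \o bags) j = M.+1%:R.
Proof.
apply: (@eq_bound_of_sum _ _ (load p (sigma \o bags))) => [{}j|].
  apply: le_trans (load_le_makespan _ _ j) (le_trans (A_cons _ _) _).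
  - exact: unit_jobs_nonneg.
  - exact: opt_unit_jobs_le.
by rewrite sum_load !sumr_const !card_ord /n natrM mulr_natl.
Qed.

Lemma consistent_schedule_inj : injective sigma.
Proof.
apply: surjF_inj => j; case: (pickP (fun b => sigma b == j)) => [b /eqP|no_bag].
  by exists b.
move: (consistent_machine_load j); rewrite load_comp big_pred0 // => /esym/eqP.
by rewrite pnatr_eq0.
Qed.

Lemma consistent_bag_load b : load p bags b = M.+1%:R.
Proof.
rewrite -(consistent_machine_load (sigma b)) load_comp (big_pred1 b) // => c.
by rewrite /= (inj_eq consistent_schedule_inj).
Qed.

Lemma makespan_fewer_machines_ge (tau : 'I_M.+2 -> 'I_M.+1) :
  2 * M.+1%:R <= makespan p (tau \o bags).
Proof.
have /injectivePn[b1 [b2 b1_neq_b2 tau_b12]] : ~~ injectiveb tau.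
  by apply/injectiveP => /leq_card; rewrite !card_ord ltnn.
apply: le_trans (load_le_makespan _ _ (tau b1)).
rewrite load_comp (bigD1 b1) //= (bigD1 b2) /=; last first.
  by rewrite tau_b12 eqxx eq_sym b1_neq_b2.
rewrite !consistent_bag_load addrA mulr_natl mulr2n lerDl.
by apply: sumr_ge0 => c _; apply/load_ge0/unit_jobs_nonneg.
Qed.

Lemma robust_lower_bound rho :
  robust_within A rho -> 2 * M.+1%:R <= rho * M.+2%:R.
Proof.
move=> A_rob; have rho_gt0 := robust_within_gt0 (ltn0Sn _) A_rob.
have := A_rob n p unit_jobs_nonneg M.+2 (leqnn _) (Ordinal (ltnW (ltnSn M.+1))).
move=> /(le_trans (makespan_fewer_machines_ge _)) /le_trans; apply.
by rewrite ler_pM2l // opt_unit_jobs_le // mulnC.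
Qed.

End ConsistentSchedule.

Theorem lemma18 (R : realFieldType) (m : nat) (hm : (0 < m)%N)
  (A : ssp_alg R m) (hcons : one_consistent A) (rho : R)
  (hrob : robust_within A rho) :
  2 * (m%:R - 1) / m%:R <= rho.
Proof.
have rho_gt0 := robust_within_gt0 hm hrob.
case: m hm A hcons hrob rho_gt0 => [//|[_ _ _ _|M _ A hcons hrob _]].
  by rewrite subrr mulr0 mul0r => /ltW.
have -> : M.+2%:R - 1 = M.+1%:R :> R by rewrite -natr1 addrK.
by rewrite ler_pdivrMr ?ltr0Sn //; apply: (robust_lower_bound hcons hrob).
Qed.
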